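(* Let $f\in\mathbb{C}[x_0,\dots,x_3]_4$ be a quaternary quartic form that is not apolar to any quadric, and let $\Gamma\subset\mathbb{P}^3$ be a scheme of length ten apolar to $f$. Then $\Gamma$ imposes independent conditions on cubics, i.e. $I_{\Gamma,3}$ is $10$-dimensional.
   Context: $T=\mathbb{C}[y_0,\dots,y_3]$ acts on $S=\mathbb{C}[x_0,\dots,x_3]$ by differentiation; $f^\perp=\{g\in T:g(f)=0\}$; ''not apolar to any quadric'' means $f^\perp_2=0$. $\mathbb{P}^3=\mathbb{P}(S_1)$ has coordinate ring $T$, and $\Gamma$ is apolar to $f$ if its saturated ideal $I_\Gamma\subset f^\perp$. *)

From HB Require Import structures.
From mathcomp Require Import all_boot all_order all_algebra.
From mathcomp Require Import Rstruct complex.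
From mathcomp Require Import mpoly.


Set Implicit Arguments.
Unset Strict Implicit.
Unset Printing Implicit Defensive.

Import GRing.Theory.
Local Open Scope ring_scope.

Definition CC : Type := complex Rdefinitions.R.

(* Polynomial rings in 4 variables: S = C[x_0..x_3] and T = C[y_0..y_3];
   both are modeled by {mpoly CC[4]}. *)
Notation poly4 := {mpoly CC[4]}.

(* Apolarity action of T on S by differentiation:
   g(f) = sum_m g_m * d^m f / dx^m  (y_i acts as d/dx_i). *)
Definition apply_diff (g f : poly4) : poly4 :=
  \sum_(m <- msupp g) g@_m *: mderivm m f.

Definition hpart (d : nat) (p : poly4) : poly4 :=
  \sum_(m <- msupp p | mdeg m == d) p@_m *: 'X_[m].

Definition homog_ideal (I : poly4 -> Prop) : Prop :=
  [/\ I 0,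
      (forall p q, I p -> I q -> I (p + q)),
      (forall r p, I p -> I (r * p)) &
      (forall p d, I p -> I (hpart d p))].

(* I is saturated with respect to the irrelevant ideal (y_0,...,y_3):
   (I : m^oo) = I. *)
Definition saturated (I : poly4 -> Prop) : Prop :=
  forall g, (exists N : nat, forall i : 'I_4, I ('X_i ^+ N * g)) -> I g.

Definition lin_indep (k : nat) (v : 'I_k -> poly4) : Prop :=
  forall c : 'I_k -> CC, \sum_(i < k) c i *: v i = 0 -> forall i, c i = 0.

Definition dim_deg (I : poly4 -> Prop) (d k : nat) : Prop :=
  (exists v : 'I_k -> poly4,
      (forall i, I (v i) /\ v i \is d.-homog) /\ lin_indep v) /\
  (forall v : 'I_k.+1 -> poly4,
      (forall i, I (v i) /\ v i \is d.-homog) -> ~ lin_indep v).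

(* Hilbert function: dim_C (T_d / I_d) = k, witnessed by k forms of degree d
   whose classes form a basis of T_d / I_d. *)
Definition hilb (I : poly4 -> Prop) (d k : nat) : Prop :=
  exists g : 'I_k -> poly4,
    [/\ (forall i, g i \is d.-homog),
        (forall p, p \is d.-homog ->
           exists (c : 'I_k -> CC) (q : poly4),
             I q /\ p = q + \sum_(i < k) c i *: g i) &
        (forall c : 'I_k -> CC, I (\sum_(i < k) c i *: g i) -> forall i, c i = 0)].

(* I is the saturated homogeneous ideal I_Gamma of a subscheme Gamma of P^3
   (= Proj T) of length len, i.e. a zero-dimensional scheme whose Hilbert
   polynomial is the constant len. *)
Definition scheme_ideal_of_length (I : poly4 -> Prop) (len : nat) : Prop :=
  [/\ homog_ideal I, saturated I &
      exists d0 : nat, forall d : nat, leq d0 d -> hilb I d len].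

(* The heart of the argument is that a saturated homogeneous ideal [I] whose
   Hilbert function is eventually 10 admits a linear nonzerodivisor [l].
   Otherwise every linear form [w] kills some [y] outside [I]. As long as the
   linear forms killing [y] modulo [I] do not cut out a point, the products
   u^i v^(J-i) y with two further forms u, v are dependent modulo [I];
   factoring the resulting binary form over CC yields one more linear form
   killing a multiple of [y]. This ends with an element outside [I] supported
   at a point of P^3 where [w] vanishes. Choosing [w] nonzero at the points
   already found gives eleven distinct points, and elements supported at
   distinct points are independent modulo [I] in every degree, against
   h_I = 10 in large degree.
   Given [l]: apolarity and f^perp_2 = 0 force I_2 = 0, so the ten cubics [l q], with [q] running over a basis of
   quadrics, are independent modulo [I], while multiplying by a power of [l]
   shows that any eleven cubics are dependent modulo [I]. Hence h_I(3) = 10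
   and dim I_3 = 20 - 10. *)

From HB Require Import structures.
From mathcomp Require Import all_boot all_order all_algebra.
From mathcomp Require Import Rstruct complex mpoly.
From Stdlib Require Import Classical ClassicalEpsilon.
Import GRing.Theory.
Local Open Scope ring_scope.

Set Implicit Arguments.
Unset Strict Implicit.
Unset Printing Implicit Defensive.

Definition linform (x : 'rV[CC]_4) : poly4 := \sum_(i < 4) x 0 i *: 'X_i.

Fact linform_is_linear : linear linform.
Proof.
move=> a x y; rewrite /linform scaler_sumr -big_split; apply: eq_bigr => i _ /=.
by rewrite !mxE scalerDl scalerA.
Qed.

HB.instance Definition _ :=
  GRing.isLinear.Build CC 'rV[CC]_4 poly4 _ linform linform_is_linear.

Lemma linform_delta (i : 'I_4) : linform (delta_mx 0 i) = 'X_i.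
Proof.
rewrite /linform (bigD1 i) //= big1 ?addr0; first by rewrite mxE !eqxx scale1r.
by move=> j ji; rewrite mxE eqxx (negbTE ji) scale0r.
Qed.

Lemma linform_homog x : linform x \is 1.-homog.
Proof. by apply: rpred_sum => i _; rewrite rpredZ // dhomogX /= mdeg1. Qed.

Section HomogIdeal.
Variable I : poly4 -> Prop.
Hypothesis HI : homog_ideal I.

Lemma ideal0 : I 0. Proof. by case: HI. Qed.

Lemma idealD p q : I p -> I q -> I (p + q). Proof. by case: HI => _ + _ _; apply. Qed.

Lemma idealMl r p : I p -> I (r * p). Proof. by case: HI => _ _ + _; apply. Qed.

Lemma idealZ c p : I p -> I (c *: p).
Proof. by rewrite -mul_mpolyC; apply: idealMl. Qed.

Lemma idealB p q : I p -> I q -> I (p - q).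
Proof. by move=> Ip Iq; rewrite -scaleN1r; apply/idealD/idealZ. Qed.

Lemma ideal_sum (J : Type) (r : seq J) (P : pred J) (F : J -> poly4) :
  (forall i, P i -> I (F i)) -> I (\sum_(i <- r | P i) F i).
Proof. by move=> IF; apply: big_ind => //; [exact: ideal0 | exact: idealD]. Qed.

Lemma idealZK c p : c != 0 -> I (c *: p) -> I p.
Proof. by move=> c0 /(idealZ c^-1); rewrite scalerA mulVf ?scale1r. Qed.

End HomogIdeal.

Section RowSpaces.
Variable F : fieldType.

Lemma rank_addsmx_gt m n (A : 'M[F]_(m, n)) (w : 'rV_n) :
  ~~ (w <= A)%MS -> (\rank A < \rank (A + w))%N.
Proof.
by move=> wA; apply: rank_ltmx; rewrite ltmxE addsmxSl addsmx_sub submx_refl.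
Qed.

Lemma rank_addsmx_leS m n (A : 'M[F]_(m, n)) (w : 'rV_n) :
  (\rank (A + w) <= (\rank A).+1)%N.
Proof.
apply: leq_trans (mxrank_adds_leqif A w : (_ <= _)%N) _.
by rewrite -[(\rank A).+1]addn1 leq_add2l rank_leq_row.
Qed.

Lemma exists_delta_notin m n (A : 'M[F]_(m, n)) :
  (\rank A < n)%N -> exists i : 'I_n, ~~ ((delta_mx 0 i : 'rV_n) <= A)%MS.
Proof.
move=> rA; apply: NNPP => all_in; move: rA; rewrite ltnNge col_leq_rank -sub1mx.
move/negP; apply; apply/row_subP => i; rewrite row1.
by apply/negPn/negP => nsub; apply: all_in; exists i.
Qed.

Lemma pencil_notin m n (A : 'M[F]_(m, n)) (u v : 'rV_n) a b :
  ~~ (u <= A)%MS -> ~~ (v <= A + u)%MS -> (a != 0) || (b != 0) ->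
  ~~ ((a *: u + b *: v)%R <= A)%MS.
Proof.
move=> uA vAu ab; apply/negP => wA; have [b0|b0] := eqVneq b 0.
  move: ab wA; rewrite b0 eqxx orbF scale0r addr0 => a0 auA.
  by move/negP: uA; apply; rewrite -[u](scalerK a0) scalemx_sub.
move/negP: vAu; apply; rewrite -[v](scalerK b0) scalemx_sub //.
rewrite -[_ *: v](addKr (a *: u)) addmx_sub // ?scaleNr.
  by rewrite eqmx_opp scalemx_sub // addsmxSr.
exact: submx_trans wA (addsmxSl _ _).
Qed.

Lemma submx_eq_rank m1 m2 n (A : 'M[F]_(m1, n)) (B : 'M_(m2, n)) :
  \rank A = \rank B -> (A <= B)%MS -> (B <= A)%MS.
Proof.
by move=> rAB sAB; have := (mxrank_leqif_eq sAB).2; rewrite rAB eqxx => /esym/andP[].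
Qed.

End RowSpaces.

Definition indep_mod (I : poly4 -> Prop) n (s : 'I_n -> poly4) :=
  forall c : 'I_n -> CC, I (\sum_i c i *: s i) -> forall i, c i = 0.

Lemma not_indep_modP I n (s : 'I_n -> poly4) : ~ indep_mod I s ->
  exists2 c : 'I_n -> CC, I (\sum_i c i *: s i) & exists i, c i != 0.
Proof.
rewrite /indep_mod => /not_all_ex_not [c /(imply_to_and (I _)) [Ic]].
move=> /not_all_ex_not [i ci].
by exists c => //; exists i; apply/eqP.
Qed.

Definition nonzerodivisor (I : poly4 -> Prop) (l : poly4) :=
  forall y e, y \is e.-homog -> I (l * y) -> I y.

(* [z] lies in the colon ideal of [I] by the linear forms in the row space of
   [A]; when [\rank A = 3] these forms cut out a point of P^3, and [z] is then
   supported at that point modulo [I]. *)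
Definition killed (I : poly4 -> Prop) m (A : 'M[CC]_(m, 4)) (z : poly4) :=
  forall x : 'rV_4, (x <= A)%MS -> I (linform x * z).

Section Killed.
Variable I : poly4 -> Prop.
Hypothesis HI : homog_ideal I.
Hypothesis Isat : saturated I.

Lemma killedMl m (A : 'M_(m, 4)) z t : killed I A z -> killed I A (t * z).
Proof. by move=> kz x /kz xz; rewrite mulrCA; apply: idealMl. Qed.

Lemma killed_adds m (A : 'M_(m, 4)) (w : 'rV_4) z :
  killed I A z -> I (linform w * z) -> killed I (A + w)%MS z.
Proof.
move=> kz wz x /sub_addsmxP [[u1 u2] /= ->].
rewrite linearD mulrDl; apply: (idealD HI); first exact/kz/submxMl.
by rewrite [u2]mx11_scalar mul_scalar_mx linearZ -scalerAl; apply: idealZ.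
Qed.

Lemma killed_row (w : 'rV_4) z : I (linform w * z) -> killed I w z.
Proof.
by move=> wz x /sub_rVP [a ->]; rewrite linearZ -scalerAl; apply: idealZ.
Qed.

Lemma killed_full m (A : 'M_(m, 4)) z : killed I A z -> row_full A -> I z.
Proof.
move=> kz fullA; apply: Isat; exists 1%N => i.
by rewrite expr1 -linform_delta; apply/kz/submx_full.
Qed.

Lemma killed_point_mul m (A : 'M_(m, 4)) z w :
  killed I A z -> \rank A = 3%N -> ~ I z -> ~~ (w <= A)%MS -> ~ I (linform w * z).
Proof.
move=> kz rA zI wA wz; apply/zI/(killed_full (killed_adds kz wz)).
by rewrite -col_leq_rank; have := rank_addsmx_gt wA; rewrite rA.
Qed.

End Killed.

Section HighDegree.
Variables (I : poly4 -> Prop) (len d0 : nat).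
Hypothesis HI : homog_ideal I.
Hypothesis Ihilb : forall d, (d0 <= d)%N -> hilb I d len.

Lemma dependent_high_degree D n (s : 'I_n -> poly4) :
  (d0 <= D)%N -> (len < n)%N -> (forall k, s k \is D.-homog) -> ~ indep_mod I s.
Proof.
move=> hD hn hs s_indep; have [g [_ g_span _]] := Ihilb hD.
have /fin_all_exists [F hF] k : exists cq : ('I_len -> CC) * poly4,
    I cq.2 /\ s k = cq.2 + \sum_i cq.1 i *: g i.
  by have [c [q [hq e]]] := g_span _ (hs k); exists (c, q).
pose M := \matrix_(k < n, j < len) (F k).1 j.
have /rowV0Pn [x /sub_kermxP xM x0] : kermx M != 0.
  by rewrite kermx_eq0 -row_leq_rank -ltnNge (leq_ltn_trans (rank_leq_col M)).
have decomp : \sum_k x 0 k *: s k =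
    \sum_k x 0 k *: (F k).2 + \sum_j (x *m M) 0 j *: g j.
  under eq_bigr => k _ do rewrite (proj2 (hF k)) scalerDr.
  rewrite big_split /=; congr (_ + _).
  under [RHS]eq_bigr => j _ do rewrite mxE scaler_suml.
  rewrite exchange_big /=; apply: eq_bigr => k _.
  by rewrite scaler_sumr; apply: eq_bigr => j _; rewrite !mxE scalerA.
move/eqP: x0; apply; apply/rowP => k; rewrite mxE; apply: s_indep.
rewrite decomp xM; apply: (idealD HI).
  by apply: (ideal_sum HI) => k0 _; apply/(idealZ HI)/(proj1 (hF k0)).
by apply: (ideal_sum HI) => j _; rewrite mxE scale0r; apply: ideal0.
Qed.

End HighDegree.

Section BinaryForms.
Variables u v : poly4.
Implicit Types p q : {poly CC}.

Definition binform j (p : {poly CC}) : poly4 :=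
  \sum_(i < j.+1) p`_i *: (u ^+ i * v ^+ (j - i)).

Lemma binform_homog j p :
  u \is 1.-homog -> v \is 1.-homog -> binform j p \is j.-homog.
Proof.
move=> hu hv; apply: rpred_sum => i _; apply: rpredZ.
have := dhomogM (dhomogMn i hu) (dhomogMn (j - i) hv).
by rewrite !mul1n subnKC // -ltnS.
Qed.

Lemma binformB j p q : binform j (p - q) = binform j p - binform j q.
Proof. by rewrite /binform -sumrB; apply: eq_bigr => i _; rewrite coefB scalerBl. Qed.

Lemma binformMC j q c : binform j (q * c%:P) = c *: binform j q.
Proof.
by rewrite /binform scaler_sumr; apply: eq_bigr => i _; rewrite coefMC scalerA mulrC.
Qed.

Lemma binformMX j q : binform j.+1 (q * 'X) = u * binform j q.
Proof.
rewrite /binform big_ord_recl /= coefMX eqxx scale0r add0r mulr_sumr.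
by apply: eq_bigr => i _ /=; rewrite coefMX subSS exprS -mulrA scalerAr.
Qed.

Lemma binformS j p : (size p <= j.+1)%N -> binform j.+1 p = v * binform j p.
Proof.
move=> sp; rewrite /binform big_ord_recr /= nth_default // scale0r addr0.
rewrite mulr_sumr; apply: eq_bigr => i _ /=.
rewrite subSn; last by rewrite -ltnS.
by rewrite exprS mulrCA scalerAr.
Qed.

Lemma binform0 p : binform 0 p = p`_0 *: 1.
Proof. by rewrite /binform big_ord1 /= expr0 mulr1. Qed.

(* Over the algebraically closed field CC a binary form splits off a linear
   factor: either [v], or [u - r v] for a root [r] of [p]. *)
Lemma binform_linear_factor j p : p != 0 -> (size p <= j.+2)%N ->
  exists a b q, [/\ (a != 0) || (b != 0), q != 0, (size q <= j.+1)%N &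
    binform j.+1 p = (a *: u + b *: v) * binform j q].
Proof.
move=> p0 sp; have [sp1|sp1] := leqP (size p) j.+1.
  exists 0, 1, p; split => //; first by rewrite oner_neq0 orbT.
  by rewrite binformS // scale0r add0r scale1r.
have {sp sp1} sp : size p = j.+2 by apply/eqP; rewrite eqn_leq sp sp1.
have /closed_rootP [r /factor_theorem [q pq]] : size p != 1%N by rewrite sp.
have q0 : q != 0 by apply: contraNneq p0 => q0; rewrite pq q0 mul0r.
have sq : size q = j.+1.
  by move: sp; rewrite pq size_Mmonic ?monicXsubC // size_XsubC addn2 => -[].
exists 1, (- r), q; split; rewrite ?oner_neq0 ?sq //.
rewrite pq mulrBr binformB binformMX binformMC binformS ?sq //.
by rewrite scale1r mulrDl scaleNr mulNr -scalerAl.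
Qed.

End BinaryForms.

Section Pencil.
Variables (I : poly4 -> Prop) (len d0 : nat).
Hypothesis HI : homog_ideal I.
Hypothesis Ihilb : forall d, (d0 <= d)%N -> hilb I d len.

Lemma binform_zero_divisor u v j (p : {poly CC}) z : p != 0 -> (size p <= j.+1)%N ->
  I (binform u v j p * z) -> ~ I z ->
  exists a b j' q, [/\ (a != 0) || (b != 0), ~ I (binform u v j' q * z) &
    I ((a *: u + b *: v) * (binform u v j' q * z))].
Proof.
elim: j p => [|j IHj] p p0 sp pz zI.
  case: zI; move: pz; rewrite binform0 -scalerAl mul1r; apply: (idealZK HI).
  by apply: contraNneq p0 => p00; rewrite (size1_polyC sp) p00.
have [a [b [q [ab q0 sq pq]]]] := binform_linear_factor u v p0 sp.
move: pz; rewrite pq -mulrA => qz.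
have [qzI|qzI] := classic (I (binform u v j q * z)); first exact: IHj qzI zI.
by exists a, b, j, q.
Qed.

Lemma pencil_zero_divisor u v z e :
  u \is 1.-homog -> v \is 1.-homog -> z \is e.-homog -> ~ I z ->
  exists a b t k, [/\ (a != 0) || (b != 0), t \is k.-homog, ~ I (t * z) &
    I ((a *: u + b *: v) * (t * z))].
Proof.
move=> hu hv hz zI; pose J := (d0 + len)%N.
pose s (i : 'I_J.+1) := u ^+ i * v ^+ (J - i) * z.
have hs i : s i \is (J + e).-homog.
  apply: dhomogM hz; have := dhomogM (dhomogMn i hu) (dhomogMn (J - i) hv).
  by rewrite !mul1n subnKC // -ltnS.
have hD : (d0 <= J + e)%N by rewrite -addnA leq_addr.
have hJ : (len < J.+1)%N by rewrite ltnS leq_addl.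
have [c Ic [i0 ci0]] := not_indep_modP (dependent_high_degree HI Ihilb hD hJ hs).
pose p := \poly_(i < J.+1) c (inord i).
have p0 : p != 0.
  apply: contraNneq ci0 => p0; have := coef_poly J.+1 (fun i => c (inord i)) i0.
  by rewrite -/p p0 coef0 ltn_ord inord_val => <-.
have ep : binform u v J p * z = \sum_i c i *: s i.
  rewrite /binform mulr_suml; apply: eq_bigr => i _.
  by rewrite coef_poly ltn_ord inord_val -scalerAl.
have Ipz : I (binform u v J p * z) by rewrite ep.
have [a [b [j [q [ab qz Iq]]]]] := binform_zero_divisor p0 (size_poly _ _) Ipz zI.
by exists a, b, (binform u v j q), j; split => //; apply: binform_homog.
Qed.

End Pencil.

Lemma exists_row_notin (F : closedFieldType) n k (B : nat -> 'M[F]_n.+1) :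
  (forall j, (j < k)%N -> (\rank (B j) <= n)%N) ->
  exists w : 'rV[F]_n.+1, forall j, (j < k)%N -> ~~ (w <= B j)%MS.
Proof.
move=> rB; pose nu j := nz_row (kermx (B j)^T).
have nu0 j : (j < k)%N -> nu j != 0.
  by move=> jk; rewrite nz_row_eq0 kermx_eq0 -row_leq_rank mxrank_tr -ltnNge ltnS rB.
have nuB j w : (w <= B j)%MS -> w *m (nu j)^T = 0.
  case/submxP => y ->; rewrite -mulmxA -[B j]trmxK -trmx_mul.
  by have /sub_kermxP -> := nz_row_sub (kermx (B j)^T); rewrite trmx0 mulmx0.
(* Restricting to the moment curve [t |-> (t^i)_i] turns each hyperplane
   [nu j] into a nonzero polynomial in [t]. *)
pose mom (t : F) : 'rV_n.+1 := \row_i t ^+ i.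
pose P j : {poly F} := \poly_(i < n.+1) nu j 0 (inord i).
have Pt j t : (P j).[t] = (mom t *m (nu j)^T) 0 0.
  by rewrite horner_poly !mxE; apply: eq_bigr => i _; rewrite !mxE inord_val mulrC.
have P0 j : (j < k)%N -> P j != 0.
  move/nu0/rV0Pn => [i nui]; apply/eqP => /(congr1 (fun p : {poly F} => p`_i)) /eqP.
  by rewrite coef_poly ltn_ord inord_val coef0 (negbTE nui).
have /closed_nonrootP [t Qt] : \prod_(j < k) P j != 0.
  by apply/prodf_neq0 => j _; apply: P0.
exists (mom t) => j jk; apply: contra Qt => tB.
by rewrite /root horner_prod (bigD1 (Ordinal jk)) //= Pt nuB // mxE mul0r.
Qed.

Section Points.
Variables (I : poly4 -> Prop) (len d0 : nat).
Hypothesis HI : homog_ideal I.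
Hypothesis Isat : saturated I.
Hypothesis Ihilb : forall d, (d0 <= d)%N -> hilb I d len.

Lemma killed_extend m (A : 'M_(m, 4)) z e : killed I A z -> z \is e.-homog -> ~ I z ->
  (\rank A < 3)%N ->
  exists (A' : 'M_4) z' e', [/\ (A < A')%MS, killed I A' z', z' \is e'.-homog & ~ I z'].
Proof.
move=> kz hz zI rA.
have [i iA] := exists_delta_notin (ltn_trans rA (ltnSn 3)).
set u : 'rV_4 := delta_mx 0 i in iA.
have [i' i'A] : exists i', ~~ ((delta_mx 0 i' : 'rV_4) <= A + u)%MS.
  by apply: exists_delta_notin; apply: leq_ltn_trans (rank_addsmx_leS _ _) _.
set v : 'rV_4 := delta_mx 0 i' in i'A.
have [a [b [t [k [ab ht tzI Itz]]]]] :=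
  pencil_zero_divisor HI Ihilb (linform_homog u) (linform_homog v) hz zI.
exists (A + (a *: u + b *: v)%R)%MS, (t * z), (k + e)%N.
split=> //; first by rewrite ltmxE addsmxSl addsmx_sub submx_refl /= pencil_notin.
  by apply: (killed_adds HI (killedMl HI _ kz)); rewrite linearD !linearZ.
exact: dhomogM.
Qed.

Lemma killed_point m (A : 'M_(m, 4)) z e : killed I A z -> z \is e.-homog -> ~ I z ->
  exists (A' : 'M_4) z' e', [/\ (A <= A')%MS, \rank A' = 3%N, killed I A' z',
    z' \is e'.-homog & ~ I z'].
Proof.
have [n] := ubnP (3 - \rank A); elim: n m A z e => [|n IHn] m A z e.
  by rewrite ltn0.
rewrite ltnS => rAn kz hz zI; have [rA|rA] := ltnP (\rank A) 3; last first.
  exists <<A>>%MS, z, e; split => //; first by rewrite genmxE.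
    apply/eqP; rewrite mxrank_gen eqn_leq rA andbT leqNgt.
    by apply/negP => rA4; apply/zI/(killed_full Isat kz); rewrite -col_leq_rank.
  by move=> x; rewrite genmxE; apply: kz.
have [A' [z' [e' [AA' kz' hz' z'I]]]] := killed_extend kz hz zI rA.
have rA'n : (3 - \rank A' < n)%N.
  by apply: leq_trans rAn; rewrite ltn_sub2l // rank_ltmx.
have [A'' [z'' [e'' [A'A'' rest]]]] := IHn _ A' z' e' rA'n kz' hz' z'I.
by exists A'', z'', e''; split => //; apply: submx_trans (ltmxW AA') A'A''.
Qed.

End Points.

Section NonZeroDivisor.
Variables (I : poly4 -> Prop) (len d0 : nat).
Hypothesis HI : homog_ideal I.
Hypothesis Isat : saturated I.
Hypothesis Ihilb : forall d, (d0 <= d)%N -> hilb I d len.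

Lemma killed_point_homog (A : 'M_4) z e D : killed I A z -> \rank A = 3%N ->
  ~ I z -> z \is e.-homog -> (e <= D)%N ->
  exists z', [/\ killed I A z', ~ I z' & z' \is D.-homog].
Proof.
move=> kz rA zI hz eD.
have [i iA] : exists i, ~~ ((delta_mx 0 i : 'rV_4) <= A)%MS.
  by apply: exists_delta_notin; rewrite rA.
pose l := linform (delta_mx 0 i).
have lz k : [/\ killed I A (l ^+ k * z), ~ I (l ^+ k * z) &
    l ^+ k * z \is (k + e).-homog].
  elim: k => [|k [kz' z'I hz']]; first by rewrite expr0 mul1r.
  rewrite exprS -mulrA; split; first exact: (killedMl HI).
    exact (killed_point_mul HI Isat kz' rA z'I iA).
  by have := dhomogM (linform_homog (delta_mx 0 i)) hz'; rewrite add1n addSn.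
have [kz' z'I] := lz (D - e)%N; rewrite subnK // => hz'.
by exists (l ^+ (D - e) * z).
Qed.

(* Multiplying by a product of linear forms vanishing at every point but the
   [i]-th kills all terms but the [i]-th of a relation. *)
Lemma killed_points_indep n (A : 'I_n -> 'M[CC]_4) (z : 'I_n -> poly4) :
  (forall i, killed I (A i) (z i)) -> (forall i, \rank (A i) = 3%N) ->
  (forall i, ~ I (z i)) -> (forall i j, i != j -> ~~ (A j <= A i)%MS) ->
  indep_mod I z.
Proof.
move=> kz rA zI AA c Ic i.
have /fin_all_exists [l hl] j : exists l : 'rV_4,
    (l <= A j)%MS /\ (j != i -> ~~ (l <= A i)%MS).
  have [->|ji] := eqVneq j i; first by exists 0; rewrite sub0mx.
  have /row_subPn [r nr] : ~~ (A j <= A i)%MS by apply: AA; rewrite eq_sym.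
  by exists (row r (A j)); rewrite row_sub.
pose L := \prod_(j < n | j != i) linform (l j).
have Lz j : j != i -> I (L * z j).
  move=> ji; rewrite /L (bigD1 j ji) /= -mulrA mulrCA.
  exact/(idealMl HI)/(kz j)/(proj1 (hl j)).
have LzI : ~ I (L * z i).
  rewrite /L; elim/big_rec: _ => [|j p ji pI]; first by rewrite mul1r.
  rewrite -mulrA; apply: (killed_point_mul HI Isat (killedMl HI p (kz i)) (rA i) pI).
  exact: (proj2 (hl j)).
apply/eqP/negPn/negP => ci; apply/LzI/(idealZK HI ci).
have := idealMl HI L Ic; rewrite mulr_sumr (bigD1 i) //= -scalerAr => Iall.
have Irest : I (\sum_(j < n | j != i) L * (c j *: z j)).
  by apply: (ideal_sum HI) => j ji; rewrite -scalerAr; apply/(idealZ HI)/Lz.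
by have := idealB HI Iall Irest; rewrite addrK.
Qed.

Lemma distinct_killed_points k : (forall w, ~ nonzerodivisor I (linform w)) ->
  exists (A : nat -> 'M[CC]_4) (z : nat -> poly4) (e : nat -> nat),
    forall i, (i < k)%N ->
      [/\ killed I (A i) (z i), \rank (A i) = 3%N, ~ I (z i), z i \is (e i).-homog &
          forall j, (j < i)%N -> ~~ (A i <= A j)%MS].
Proof.
move=> zd; elim: k => [|k [A [z [e Hk]]]].
  by exists (fun=> 0), (fun=> 0), (fun=> 0%N).
have [w wA] : exists w : 'rV_4, forall j, (j < k)%N -> ~~ (w <= A j)%MS.
  by apply: exists_row_notin => j /Hk [_ -> _ _ _].
have [y [ey [hy wy yI]]] : exists y e, [/\ y \is e.-homog, I (linform w * y) & ~ I y].
  apply: NNPP => nzd; apply: (zd w) => y ey hy wy; apply: NNPP => yI.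
  by apply: nzd; exists y, ey.
have [A' [z' [e' [wA' rA' kz' hz' z'I]]]] :=
  killed_point HI Isat Ihilb (killed_row HI wy) hy yI.
exists (fun i => if i == k then A' else A i), (fun i => if i == k then z' else z i),
  (fun i => if i == k then e' else e i).
move=> i; rewrite ltnS leq_eqVlt => /orP [/eqP -> | ik].
  rewrite eqxx; split => // j jk; rewrite (ltn_eqF jk).
  by apply: contra (wA j jk) => A'A; apply: submx_trans wA' A'A.
rewrite (ltn_eqF ik); have [kz rA zI hz Aij] := Hk i ik; split => // j ji.
by rewrite (ltn_eqF (ltn_trans ji ik)); apply: Aij.
Qed.

Lemma exists_nonzerodivisor : exists w, nonzerodivisor I (linform w).
Proof.
apply: NNPP => none.
have zd w : ~ nonzerodivisor I (linform w) by move=> nzd; apply: none; exists w.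
have [A [z [e Hk]]] := distinct_killed_points len.+1 zd.
pose D := (d0 + \sum_(i < len.+1) e i)%N.
have /fin_all_exists [z' hz'] (i : 'I_len.+1) :
    exists z', [/\ killed I (A i) z', ~ I z' & z' \is D.-homog].
  have [kz rA zI hz _] := Hk i (ltn_ord i).
  by apply: killed_point_homog kz rA zI hz _; rewrite /D (bigD1 i) //= addnCA leq_addr.
have z'D i : z' i \is D.-homog by case: (hz' i).
apply: (dependent_high_degree HI Ihilb (leq_addr _ _ : (d0 <= D)%N) (ltnSn len) z'D).
refine (killed_points_indep (A := fun i : 'I_len.+1 => A i) _ _ _ _).
- by move=> i; case: (hz' i).
- by move=> i; case: (Hk i (ltn_ord i)).
- by move=> i; case: (hz' i).
move=> i j ij; have [ji|ij'|/val_inj eij] := ltngtP j i; last by rewrite eij eqxx in ij.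
  have [_ rAi _ _ Aij] := Hk i (ltn_ord i); have [_ rAj _ _ _] := Hk j (ltn_ord j).
  by apply: contra (Aij j ji); apply: submx_eq_rank; rewrite rAi rAj.
by have [_ _ _ _ ->] := Hk j (ltn_ord j).
Qed.

End NonZeroDivisor.

Section HilbertFunction.
Variable I : poly4 -> Prop.
Hypothesis HI : homog_ideal I.

Lemma nonzerodivisorX l d k :
  l \is d.-homog -> nonzerodivisor I l -> nonzerodivisor I (l ^+ k).
Proof.
move=> hl nzl; elim: k => [|k IHk] y e hy; first by rewrite expr0 mul1r.
by rewrite exprSr -mulrA => /(IHk _ _ (dhomogM hl hy)) /(nzl _ _ hy).
Qed.

Lemma dependent_nonzerodivisor len d0 w e n (s : 'I_n -> poly4) :
  (forall d, (d0 <= d)%N -> hilb I d len) -> nonzerodivisor I (linform w) ->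
  (len < n)%N -> (forall i, s i \is e.-homog) -> ~ indep_mod I s.
Proof.
move=> Ihilb nzw hn hs s_indep.
have hls i : linform w ^+ d0 * s i \is (d0 + e).-homog.
  by have := dhomogM (dhomogMn d0 (linform_homog w)) (hs i); rewrite mul1n.
apply: (dependent_high_degree HI Ihilb (leq_addr e d0) hn hls) => c Ic.
have hsum : \sum_i c i *: s i \is e.-homog by apply: rpred_sum => i _; rewrite rpredZ.
apply: s_indep; apply: (nonzerodivisorX (k := d0) (linform_homog w) nzw hsum).
by rewrite mulr_sumr; under eq_bigr => i _ do rewrite -scalerAr.
Qed.

Lemma indep_mod_mul_nonzerodivisor l d n (q : 'I_n -> poly4) :
  (forall y, y \is d.-homog -> I y -> y = 0) -> nonzerodivisor I l ->
  (forall i, q i \is d.-homog) -> lin_indep q -> indep_mod I (fun i => l * q i).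
Proof.
move=> Id0 nzl hq q_indep c Ic; apply: q_indep.
have hsum : \sum_i c i *: q i \is d.-homog by apply: rpred_sum => i _; rewrite rpredZ.
apply/(Id0 _ hsum)/(nzl _ _ hsum).
by rewrite mulr_sumr; under eq_bigr => i _ do rewrite -scalerAr.
Qed.

Lemma hilb_of_indep_mod d k (g : 'I_k -> poly4) :
  (forall i, g i \is d.-homog) -> indep_mod I g ->
  (forall s : 'I_k.+1 -> poly4, (forall i, s i \is d.-homog) -> ~ indep_mod I s) ->
  hilb I d k.
Proof.
move=> hg g_indep dep; exists g; split => // p hp.
pose s (i : 'I_k.+1) := if unlift ord0 i is Some j then g j else p.
have hs i : s i \is d.-homog by rewrite /s; case: unlift.
have [c Ic [i0 ci0]] := not_indep_modP (dep s hs).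
move: Ic; rewrite big_ord_recl /s unlift_none.
under eq_bigr => i _ do rewrite liftK.
have [c0|c0] := eqVneq (c ord0) 0.
  rewrite c0 scale0r add0r => /(g_indep (fun j => c (lift ord0 j))) gc.
  by case: (unliftP ord0 i0) ci0 => [j ->|->]; rewrite ?gc ?c0 eqxx.
move=> Ic; exists (fun j => - ((c ord0)^-1 * c (lift ord0 j))),
  ((c ord0)^-1 *: (c ord0 *: p + \sum_j c (lift ord0 j) *: g j)).
split; first exact: idealZ.
rewrite scalerDr scalerA mulVf // scale1r scaler_sumr -addrA -big_split /=.
by rewrite big1 ?addr0 // => j _; rewrite scalerA scaleNr addrN.
Qed.

End HilbertFunction.

Lemma exists_lin_indep_basis d (U : {vspace dhomog 4 CC d}) n : \dim U = n ->
  exists b : 'I_n -> dhomog 4 CC d,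
    (forall i, b i \in U) /\ lin_indep (fun i => val (b i)).
Proof.
move=> dimU; move: (vbasis U) (vbasisP U); rewrite dimU => X X_basis.
exists (tnth X); split => [i | c Xc]; first by rewrite (basis_mem X_basis) ?mem_tnth.
move/freeP: (basis_free X_basis); apply; apply: val_inj; rewrite /= linear_sum -[RHS]Xc.
by apply: eq_bigr => i _; rewrite (tnth_nth 0).
Qed.

Lemma lin_indep_dim_leq d (U : {vspace dhomog 4 CC d}) n (b : 'I_n -> dhomog 4 CC d) :
  (forall i, b i \in U) -> lin_indep (fun i => val (b i)) -> (n <= \dim U)%N.
Proof.
move=> bU b_indep; pose X := [tuple b i | i < n].
have X_free : free X.
  apply/freeP => c Xc i; apply: b_indep.
  have -> : \sum_j c j *: val (b j) = val (\sum_j c j *: X`_j).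
    by rewrite linear_sum; apply: eq_bigr => j _; rewrite -tnth_nth tnth_mktuple.
  by rewrite Xc linear0.
have XU : (<<X>> <= U)%VS.
  by apply/span_subvP => x /tnthP [i ->]; rewrite tnth_mktuple.
by have := dimvS XU; rewrite (eqnP X_free) size_tuple.
Qed.

Section Coordinates.
Variables (I : poly4 -> Prop) (d k : nat) (g : 'I_k -> poly4).
Hypothesis HI : homog_ideal I.
Hypothesis g_homog : forall i, g i \is d.-homog.
Hypothesis g_span : forall p, p \is d.-homog ->
  exists (c : 'I_k -> CC) (q : poly4), I q /\ p = q + \sum_(i < k) c i *: g i.
Hypothesis g_indep : indep_mod I g.

Definition coord_mod (p : poly4) : 'rV[CC]_k :=
  epsilon (inhabits 0) (fun c : 'rV[CC]_k => I (p - \sum_j c 0 j *: g j)).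

Lemma coord_mod_spec p (c : 'rV[CC]_k) :
  I (p - \sum_j c 0 j *: g j) -> I (p - \sum_j coord_mod p 0 j *: g j).
Proof.
move=> Ic; apply: (epsilon_spec _ (fun c : 'rV_k => I (p - \sum_j c 0 j *: g j))).
by exists c.
Qed.

Lemma coord_modP p : p \is d.-homog -> I (p - \sum_j coord_mod p 0 j *: g j).
Proof.
move=> hp; have [c [q [Iq ->]]] := g_span hp; apply: (coord_mod_spec (c := \row_j c j)).
have -> : \sum_j (\row_j c j) 0 j *: g j = \sum_j c j *: g j.
  by apply: eq_bigr => j _; rewrite mxE.
by rewrite addrK.
Qed.

Lemma coord_mod_uniq p (c : 'rV[CC]_k) : I (p - \sum_j c 0 j *: g j) -> coord_mod p = c.
Proof.
move=> Ic; have Icp := coord_mod_spec Ic.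
have : I (\sum_j (coord_mod p 0 j - c 0 j) *: g j).
  move: (idealB HI Ic Icp); congr I.
  by rewrite opprB addrC addrA subrK -sumrB; apply: eq_bigr => j _; rewrite scalerBl.
move/g_indep => cc; apply/rowP => j; apply/eqP; rewrite -subr_eq0; exact/eqP/cc.
Qed.

Definition coordv (v : dhomog 4 CC d) : 'rV[CC]_k := coord_mod (val v).

Lemma coordv_is_linear : linear coordv.
Proof.
move=> a u v; apply: coord_mod_uniq.
have Iu := coord_modP (dhomog_is_dhomog u); have Iv := coord_modP (dhomog_is_dhomog v).
move: (idealD HI (idealZ HI a Iu) Iv); congr I; rewrite linearP /= scalerBr.
under [X in _ = _ - X]eq_bigr => j _ do rewrite !mxE scalerDl -scalerA.
by rewrite big_split /= -scaler_sumr opprD addrACA.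
Qed.

Lemma dim_deg_of_coords m : 'C(d + 3, d) = (k + m)%N -> dim_deg I d m.
Proof.
move=> dim_d.
pose coordL : {linear dhomog 4 CC d -> 'rV[CC]_k} :=
  HB.pack coordv (GRing.isLinear.Build CC _ _ *:%R coordv coordv_is_linear).
pose F := linfun coordL.
have sum0 : \sum_j (0 : 'rV[CC]_k) 0 j *: g j = 0.
  by rewrite big1 // => j _; rewrite mxE scale0r.
have kerF v : v \in lker F <-> I (val v).
  rewrite memv_ker lfunE /=; split => [/eqP Fv | Iv].
    have := coord_modP (dhomog_is_dhomog v).
    by rewrite /coordv in Fv; rewrite Fv sum0 subr0.
  by apply/eqP/coord_mod_uniq; rewrite sum0 subr0.
have imF : \dim (F @: fullv) = k.
  apply/eqP; rewrite eqn_leq; apply/andP; split.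
    by have := dimvS (subvf (F @: fullv)); rewrite dimvf /dim /= mul1n.
  suff /dimvS : (fullv <= F @: fullv)%VS by rewrite dimvf /dim /= mul1n.
  apply/subvP => c _.
  have hc : \sum_j c 0 j *: g j \is d.-homog.
    by apply: rpred_sum => j _; rewrite rpredZ.
  have -> : c = F (DHomog hc).
    by rewrite lfunE /=; symmetry; apply: coord_mod_uniq; rewrite subrr; apply: ideal0.
  exact/memv_img/memvf.
have dim_ker : \dim (lker F) = m.
  have := limg_ker_dim F fullv.
  by rewrite capfv imF dimvf /dim /= dim_d [(k + m)%N]addnC => /addIn.
split.
  have [b [bK b_indep]] := exists_lin_indep_basis dim_ker.
  exists (fun i => val (b i)); split => // i.
  by split; [apply/kerF | apply: dhomog_is_dhomog].
move=> v hv v_indep; pose b i := DHomog (proj2 (hv i)).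
have bF i : b i \in lker F by apply/kerF; case: (hv i).
have := lin_indep_dim_leq bF v_indep.
by rewrite dim_ker ltnn.
Qed.

End Coordinates.

Lemma dim_deg_of_hilb I d k m : homog_ideal I -> hilb I d k ->
  'C(d + 3, d) = (k + m)%N -> dim_deg I d m.
Proof. by move=> HI [g [hg g_span g_indep]]; apply: dim_deg_of_coords. Qed.

Theorem lemma4p2 (f : poly4) (I : poly4 -> Prop) :
  f \is 4.-homog ->
  (* f is not apolar to any quadric: f^perp_2 = 0 *)
  (forall g : poly4, g \is 2.-homog -> apply_diff g f = 0 -> g = 0) ->
  (* I = I_Gamma for a scheme Gamma of length ten *)
  scheme_ideal_of_length I 10 ->
  (* Gamma is apolar to f: I_Gamma is contained in f^perp *)
  (forall g, I g -> apply_diff g f = 0) ->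
  (* Gamma imposes independent conditions on cubics: h_Gamma(3) = 10,
     i.e. I_{Gamma,3} is 10-dimensional *)
  hilb I 3 10 /\ dim_deg I 3 10.
Proof.
move=> _ f_perp2 [HI Isat [d0 Ihilb]] apolar.
have I2 y : y \is 2.-homog -> I y -> y = 0 by move=> y2 /apolar; apply: f_perp2.
have [w nzw] := exists_nonzerodivisor HI Isat Ihilb.
have [q [_ q_indep]] : exists q : 'I_10 -> dhomog 4 CC 2,
    (forall i, q i \in fullv) /\ lin_indep (fun i => val (q i)).
  by apply: exists_lin_indep_basis; rewrite dimvf.
have hilb3 : hilb I 3 10.
  apply: (hilb_of_indep_mod HI (g := fun i => linform w * val (q i))).
  - by move=> i; apply: dhomogM (linform_homog w) (dhomog_is_dhomog (q i)).
  - apply: indep_mod_mul_nonzerodivisor I2 nzw _ q_indep => i.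
    exact: dhomog_is_dhomog.
  - by move=> s hs; exact (dependent_nonzerodivisor HI Ihilb nzw (ltnSn 10) hs).
by split=> //; apply: dim_deg_of_hilb HI hilb3 _.
Qed.
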